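(* There is no sequence $(a_n)_{n\ge0}$ of positive integers such that the graph $G=G((a_n)_{n\ge0})$ satisfies $p_{\mathrm{cut,E}}(G)<p_{\mathrm{cut,V}}(G)$.
   Context: For a sequence $(a_n)_{n\ge0}$ of positive integers, $G((a_n)_{n\ge0})$ is the multigraph with vertex set $\mathbb{N}=\{0,1,2,\dots\}$ and, for each $n\ge0$, exactly $a_n$ parallel edges between $n$ and $n+1$ (and no other edges). For a locally finite, connected, infinite (multi)graph $G=(V,E)$ and a vertex $x$ (the thresholds below do not depend on $x$; one may take $x=0$), consider Bernoulli$(p)$ bond percolation (each edge open independently with probability $p$), with law $\mathbb{P}_p$, expectation $\mathbb{E}_p$, and open cluster $C(x)$ of $x$. A vertex cutset separating $x$ from infinity is a set $\Pi_V\subset V$ such that the connected component of $x$ in $G$ with the vertices of $\Pi_V$ deleted is finite; an edge cutset is a set $\Pi_E\subset E$ such that the component of $x$ in $G$ with the edges of $\Pi_E$ deleted is finite. Define $p_{\mathrm{cut,E}}=\sup\{p\ge0:\inf_{\Pi_E}\mathbb{E}_p[|C(x)\cap\Pi_E|]=0\}$, where $C(x)\cap\Pi_E$ is the set of (open) edges of $C(x)$ lying in $\Pi_E$ and the infimum is over all edge cutsets separating $x$ from infinity, and $p_{\mathrm{cut,V}}=\sup\{p\ge0:\inf_{\Pi_V}\mathbb{E}_p[|C(x)\cap\Pi_V|]=0\}$, where $C(x)\cap\Pi_V$ is the set of vertices of $C(x)$ in $\Pi_V$ and the infimum is over all vertex cutsets separating $x$ from infinity. *)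

From HB Require Import structures.
From mathcomp Require Import all_boot all_order all_algebra.
From mathcomp Require Import all_classical all_reals ereal.
From Stdlib Require Import Relation_Operators.
Set Implicit Arguments. Unset Strict Implicit. Unset Printing Implicit Defensive.
Import Order.TTheory GRing.Theory Num.Theory.
Local Open Scope classical_set_scope.
Local Open Scope ring_scope.

(* The multigraph G((a_n)): vertices are nat; its edges are the pairs (n, i)
   with i < a n, the edge (n, i) joining n and n.+1. The root vertex is x = 0. *)

Definition is_edge (a : nat -> nat) (e : nat * nat) : Prop := (e.2 < a e.1)%N.

Definition joins (e : nat * nat) (u v : nat) : Prop :=
  (u = e.1 /\ v = e.1.+1) \/ (u = e.1.+1 /\ v = e.1).

Definition adjE (a : nat -> nat) (S : set (nat * nat)) (u v : nat) : Prop :=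
  exists e, is_edge a e /\ ~ S e /\ joins e u v.

Definition adjV (a : nat -> nat) (T : set nat) (u v : nat) : Prop :=
  ~ T u /\ ~ T v /\ exists e, is_edge a e /\ joins e u v.

(* S is an edge cutset separating 0 from infinity: the component of 0 in G - S
   is finite *)
Definition edge_cutset (a : nat -> nat) (S : set (nat * nat)) : Prop :=
  S `<=` is_edge a /\
  exists N, forall v, clos_refl_trans nat (adjE a S) 0%N v -> (v < N)%N.

(* T is a vertex cutset separating 0 from infinity: the component of 0 in G - T
   (empty if 0 is in T) is finite *)
Definition vertex_cutset (a : nat -> nat) (T : set nat) : Prop :=
  exists N, forall v, ~ T 0%N -> clos_refl_trans nat (adjV a T) 0%N v -> (v < N)%N.

(* ---- Bernoulli(p) bond percolation on the finite truncations G_N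
   (vertices 0..N, all edges at levels < N). ---- *)

Definition edges_upto (a : nat -> nat) (N : nat) : seq (nat * nat) :=
  [seq (n, i) | n <- iota 0 N, i <- iota 0 (a n)].

Definition EN (a : nat -> nat) (N : nat) := seq_sub (edges_upto a N).

Definition config (a : nat -> nat) (N : nat) := {ffun EN a N -> bool}.

Definition weight (R : realType) (a : nat -> nat) (N : nat) (p : R)
  (w : config a N) : R :=
  \prod_(e : EN a N) (if w e then p else 1 - p).

Definition oadj (a : nat -> nat) (N : nat) (w : config a N) (u v : nat) : Prop :=
  exists e : EN a N, w e /\ joins (ssval e) u v.

Definition inC (a : nat -> nat) (N : nat) (w : config a N) (v : nat) : Prop :=
  clos_refl_trans nat (oadj w) 0%N v.

Definition countE (a : nat -> nat) (N : nat) (S : set (nat * nat))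
  (w : config a N) : nat :=
  #|[set e : EN a N | `[< w e /\ (inC w (ssval e).1 \/ inC w (ssval e).1.+1)
                          /\ S (ssval e) >]]|.

Definition countV (a : nat -> nat) (N : nat) (T : set nat)
  (w : config a N) : nat :=
  #|[set v : 'I_N.+1 | `[< inC w (nat_of_ord v) /\ T (nat_of_ord v) >]]|.

Definition expE_N (R : realType) (a : nat -> nat) (p : R) (S : set (nat * nat))
  (N : nat) : R :=
  \sum_(w : config a N) weight p w * (countE S w)%:R.

Definition expV_N (R : realType) (a : nat -> nat) (p : R) (T : set nat)
  (N : nat) : R :=
  \sum_(w : config a N) weight p w * (countV T w)%:R.

(* E_p[|C(0) ∩ S|] on the infinite graph: by monotone convergence it is the
   supremum (increasing limit) of the expectations on the truncations G_N,
   since C_N(0) increases to C(0). *)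
Definition expE (R : realType) (a : nat -> nat) (p : R) (S : set (nat * nat))
  : \bar R := ereal_sup (range (fun N => (expE_N a p S N)%:E)).

Definition expV (R : realType) (a : nat -> nat) (p : R) (T : set nat)
  : \bar R := ereal_sup (range (fun N => (expV_N a p T N)%:E)).

Definition p_cut_E (R : realType) (a : nat -> nat) : \bar R :=
  ereal_sup [set p%:E | p in [set p : R | 0 <= p <= 1 /\
     ereal_inf [set expE a p S | S in edge_cutset a] = 0%E]].

Definition p_cut_V (R : realType) (a : nat -> nat) : \bar R :=
  ereal_sup [set p%:E | p in [set p : R | 0 <= p <= 1 /\
     ereal_inf [set expV a p T | T in vertex_cutset a] = 0%E]].

From mathcomp Require Import all_boot all_order all_algebra.
From mathcomp Require Import all_classical all_reals ereal.
From mathcomp Require Import ring lra.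
From Stdlib Require Import Relation_Operators Operators_Properties.
Set Implicit Arguments. Unset Strict Implicit. Unset Printing Implicit Defensive.
Import Order.TTheory GRing.Theory Num.Theory.
Local Open Scope ring_scope.

(* The cluster of 0 reaches k with probability
   [conn_prob a p k = prod_(n < k) (1 - (1 - p)^(a n))]. Every vertex cutset contains
   some vertex k, so the vertex infimum vanishes at p only if [inf_k conn_prob a p k = 0];
   the a k edges of level k form an edge cutset meeting C(0) in at most
   [a k * conn_prob a p k] open edges on average. It remains to see that
   [inf_k conn_prob a p k = 0] and p' < p force [inf_k a k * conn_prob a p' k = 0].
   If instead [a k * conn_prob a p' k >= c > 0] for all k, Bernoulli's inequality
   [(1 - p')^a >= a (p - p') (1 - p)^a] turns the telescoping identity
   [conn_prob a p' j - conn_prob a p' k = sum_(j <= n < k) conn_prob a p' n * (1 - p')^(a n)]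
   into a bound on the tails of [sum_n (1 - p)^(a n)], and then
   [prod (1 - x_n) >= 1 - sum x_n] keeps [conn_prob a p] away from 0. *)

Lemma prodr_nat_bool (R : comPzSemiRingType) (I : finType) (P : pred I) (b : I -> bool) :
  \prod_(i | P i) ((b i)%:R : R) = [forall i, P i ==> b i]%:R.
Proof.
have [allb | /forallPn[i]] := boolP [forall i, P i ==> b i]; last first.
  by rewrite negb_imply => /andP[Pi /negbTE nbi]; rewrite (bigD1 i) //= nbi mul0r.
by rewrite big1 // => i Pi; move/forallP/(_ i): allb; rewrite Pi => /= ->.
Qed.

Lemma prodr_leq_split (R : comPzSemiRingType) (I : finType) (f : I -> nat) (F : I -> R) k :
  \prod_(i | (k <= f i)%N) F i = \prod_(i | f i == k) F i * \prod_(i | (k < f i)%N) F i.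
Proof.
rewrite (bigID (fun i => f i == k)) /=; congr (_ * _); apply: eq_bigl => i.
  by case: eqP => [->|]; rewrite ?leqnn ?andbF.
by rewrite ltn_neqAle eq_sym andbC.
Qed.

Section BernoulliConfigurations.
Variables (R : realType) (I : finType) (p : R).

Lemma expect_prod (h : I -> bool -> R) :
  \sum_(w : {ffun I -> bool}) (\prod_i (if w i then p else 1 - p)) * \prod_i h i (w i)
  = \prod_i (p * h i true + (1 - p) * h i false).
Proof.
pose f i b := (if b then p else 1 - p) * h i b.
rewrite (eq_bigr (fun w : {ffun I -> bool} => \prod_i f i (w i))) => [|w _]; last first.
  by rewrite big_split.
rewrite -(bigA_distr_bigA f).
by apply: eq_bigr => i _; rewrite big_bool.
Qed.

Variable lev : I -> nat.

Definition open_levels (k : nat) (w : {ffun I -> bool}) : bool :=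
  [forall n : 'I_k, [exists i, (lev i == n) && w i]].

Lemma open_levelsS k w :
  open_levels k.+1 w = open_levels k w && [exists i, (lev i == k) && w i].
Proof.
apply/forallP/andP => [allS | [/forallP lt_k at_k] n].
  by split; [apply/forallP => n; exact: (allS (widen_ord (leqnSn k) n)) | exact: (allS ord_max)].
have [n_lt_k | ] := ltnP n k; first exact: (lt_k (Ordinal n_lt_k)).
move=> k_le_n; suff /eqP-> : (n : nat) == k by [].
by rewrite eqn_leq k_le_n -ltnS ltn_ord.
Qed.

Lemma open_levelsS_nat k w : (open_levels k.+1 w)%:R =
  (open_levels k w)%:R * (1 - \prod_(i | lev i == k) ((~~ w i)%:R : R)).
Proof.
rewrite prodr_nat_bool open_levelsS.
have -> : [forall i, (lev i == k) ==> ~~ w i] = ~~ [exists i, (lev i == k) && w i].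
  by rewrite negb_exists; apply: eq_forallb => i; rewrite negb_and implybE.
by case: (open_levels k w); case: [exists i, _] => /=; ring.
Qed.

Let mean (h : I -> bool -> R) i := p * h i true + (1 - p) * h i false.
Let closed_mean (h : I -> bool -> R) i := (1 - p) * h i false.

Lemma expect_open_levels_prod (h : I -> bool -> R) k :
  \sum_(w : {ffun I -> bool})
     (\prod_i (if w i then p else 1 - p)) * ((open_levels k w)%:R * \prod_i h i (w i))
  = (\prod_(i | (k <= lev i)%N) mean h i) *
    \prod_(n < k) (\prod_(i | lev i == n) mean h i - \prod_(i | lev i == n) closed_mean h i).
Proof.
elim: k h => [|k IH] h.
  have all_open w : open_levels 0 w by apply/forallP => -[].
  under [LHS]eq_bigr do rewrite all_open mul1r.
  by rewrite expect_prod big_ord0 mulr1.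
pose h' i b := if lev i == k then h i b * (~~ b)%:R else h i b.
have h'E w : \prod_i h' i (w i) = (\prod_(i | lev i == k) (~~ w i)%:R) * \prod_i h i (w i).
  rewrite [X in _ = X * _]big_mkcond -big_split; apply: eq_bigr => i _ /=.
  by rewrite /h'; case: (lev i == k); rewrite ?mul1r // mulrC.
have open_levelsSE w : (open_levels k.+1 w)%:R * \prod_i h i (w i) =
    (open_levels k w)%:R * \prod_i h i (w i) - (open_levels k w)%:R * \prod_i h' i (w i).
  by rewrite open_levelsS_nat h'E; ring.
under [LHS]eq_bigr do rewrite open_levelsSE mulrBr.
rewrite sumrB !IH.
have mean_h' i : mean h' i = if lev i == k then closed_mean h i else mean h i.
  by rewrite /mean /closed_mean /h'; case: (lev i == k) => /=; ring.
have closed_mean_h' i : closed_mean h' i = closed_mean h i.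
  by rewrite /closed_mean /h'; case: (lev i == k) => /=; ring.
rewrite !(prodr_leq_split lev _ k) big_ord_recr /=.
have at_k : \prod_(i | lev i == k) mean h' i = \prod_(i | lev i == k) closed_mean h i.
  by apply: eq_bigr => i /eqP lev_i; rewrite mean_h' lev_i eqxx.
have above_k : \prod_(i | (k < lev i)%N) mean h' i = \prod_(i | (k < lev i)%N) mean h i.
  by apply: eq_bigr => i k_lt; rewrite mean_h' gtn_eqF.
have below_k : \prod_(n < k) (\prod_(i | lev i == n) mean h' i - \prod_(i | lev i == n) closed_mean h' i)
    = \prod_(n < k) (\prod_(i | lev i == n) mean h i - \prod_(i | lev i == n) closed_mean h i).
  apply: eq_bigr => n _; congr (_ - _); apply: eq_bigr => i /eqP lev_i.
    by rewrite mean_h' lev_i ltn_eqF.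
  exact: closed_mean_h'.
rewrite at_k above_k below_k; ring.
Qed.

Lemma prob_open_levels k :
  \sum_(w : {ffun I -> bool}) (\prod_i (if w i then p else 1 - p)) * (open_levels k w)%:R
  = \prod_(n < k) (1 - (1 - p) ^+ #|[pred i | lev i == n]|).
Proof.
rewrite (eq_bigr (fun w : {ffun I -> bool} => (\prod_i (if w i then p else 1 - p)) *
  ((open_levels k w)%:R * \prod_i (fun _ _ => 1) i (w i)))) => [|w _]; last first.
  by rewrite big1_eq mulr1.
rewrite (expect_open_levels_prod (fun _ _ => 1)) /mean /closed_mean big1 ?mul1r => [|i _]; last first.
  by rewrite !mulr1 subrKC.
apply: eq_bigr => n _; rewrite big1 => [|i _]; last by rewrite !mulr1 subrKC.
by rewrite (eq_bigr (fun=> 1 - p)) ?prodr_const // => i _; rewrite mulr1.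
Qed.

End BernoulliConfigurations.

Lemma bernoulli_ineq (R : realDomainType) (q d : R) n :
  0 <= q <= 1 -> 0 <= d -> q ^+ n * n%:R * d <= (q + d) ^+ n.
Proof.
move=> /andP[q0 q1] d0; elim: n => [|n IH]; first by rewrite mulr0 mul0r expr0.
have qn0 : 0 <= q ^+ n by apply: exprn_ge0.
have qn_le : q ^+ n <= (q + d) ^+ n by apply: lerXn2r; rewrite ?nnegrE; lra.
rewrite !exprS -addn1 natrD.
set X := q ^+ n in IH qn0 qn_le *; set Y := (q + d) ^+ n in IH qn_le *.
have h1 : q * (X * n%:R * d) <= q * Y by apply: ler_wpM2l.
have h2 : q * X * d <= Y * d by apply: ler_wpM2r => //; nra.
nra.
Qed.

Lemma sub1_sum_le_prod (R : realDomainType) (I : Type) (r : seq I) (x : I -> R) :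
  (forall i, 0 <= x i <= 1) -> 1 - \sum_(i <- r) x i <= \prod_(i <- r) (1 - x i).
Proof.
move=> x01; elim: r => [|i r IH]; first by rewrite !big_nil subr0.
rewrite !big_cons; have /andP[xi0 xi1] := x01 i.
have S0 : 0 <= \sum_(j <- r) x j by apply: sumr_ge0 => j _; case/andP: (x01 j).
have : (1 - x i) * (1 - \sum_(j <- r) x j) <= (1 - x i) * \prod_(j <- r) (1 - x j).
  by apply: ler_wpM2l; rewrite ?subr_ge0.
nra.
Qed.

Lemma exprn1B_in01 (R : realDomainType) (p : R) n : 0 <= p <= 1 -> 0 <= (1 - p) ^+ n <= 1.
Proof. by case/andP=> p0 p1; rewrite exprn_ge0 ?exprn_ile1 //; lra. Qed.

Section ConnectionProbability.
Variables (R : realType) (a : nat -> nat).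

Definition conn_prob (p : R) (k : nat) : R := \prod_(0 <= n < k) (1 - (1 - p) ^+ a n).

Lemma conn_probS p k : conn_prob p k.+1 = conn_prob p k * (1 - (1 - p) ^+ a k).
Proof. exact: big_nat_recr. Qed.

Lemma conn_prob_cat p j k : (j <= k)%N ->
  conn_prob p k = conn_prob p j * \prod_(j <= n < k) (1 - (1 - p) ^+ a n).
Proof. by move=> jk; rewrite /conn_prob -big_cat_nat. Qed.

Lemma conn_prob_homo p' p k :
  0 <= p' -> p' <= p -> p <= 1 -> conn_prob p' k <= conn_prob p k.
Proof.
move=> p'0 p'p p1; apply: ler_prod => n _; rewrite subr_ge0 exprn_ile1 ?lerD2l ?lerN2; try lra.
by rewrite lerXn2r ?nnegrE; lra.
Qed.

Variable p : R.
Hypothesis p01 : 0 <= p <= 1.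

Lemma conn_prob_ge0 k : 0 <= conn_prob p k.
Proof. by apply: prodr_ge0 => n _; rewrite subr_ge0; case/andP: (exprn1B_in01 (a n) p01). Qed.

Lemma conn_prob_gt0 k : (forall n, (0 < a n)%N) -> 0 < p -> 0 < conn_prob p k.
Proof.
move=> apos p0; have p1 : p <= 1 by case/andP: p01.
by apply: prodr_gt0 => n _; rewrite subr_gt0 exprn_ilt1 -?lt0n //; lra.
Qed.

Lemma conn_prob_nonincr j k : (j <= k)%N -> conn_prob p k <= conn_prob p j.
Proof.
move=> jk; rewrite (conn_prob_cat p jk) ler_piMr ?conn_prob_ge0 //.
apply: prodr_ile1 => n _; have /andP[q0 q1] := exprn1B_in01 (a n) p01.
by rewrite subr_ge0 q1 lerBlDr lerDl.
Qed.

Lemma conn_prob_telescope j k : (j <= k)%N ->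
  conn_prob p j - conn_prob p k = \sum_(j <= n < k) conn_prob p n * (1 - p) ^+ a n.
Proof.
move=> jk; rewrite (telescope_sumr_eq (fun n => - conn_prob p n)) // => [|n _].
  by rewrite opprK addrC.
by rewrite conn_probS; ring.
Qed.

End ConnectionProbability.

Lemma tail_sum_closed_le (R : realType) (a : nat -> nat) (p' p c : R) j k :
  0 <= p' -> p' < p -> p <= 1 -> (forall n, c <= (a n)%:R * conn_prob a p' n) -> (j <= k)%N ->
  c * (p - p') * \sum_(j <= n < k) (1 - p) ^+ a n <= conn_prob a p' j.
Proof.
move=> p'0 p'p p1 c_le jk; have p'01 : 0 <= p' <= 1 by apply/andP; split; lra.
apply: (@le_trans _ _ (conn_prob a p' j - conn_prob a p' k)); last first.
  by rewrite lerBlDr lerDl conn_prob_ge0.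
rewrite conn_prob_telescope // mulr_sumr; apply: ler_sum_nat => n _.
have q0 : 0 <= (1 - p) ^+ a n by apply: exprn_ge0; lra.
apply: (@le_trans _ _ ((a n)%:R * conn_prob a p' n * (p - p') * (1 - p) ^+ a n)).
  by rewrite ler_wpM2r // ler_wpM2r ?c_le //; lra.
have bern : (1 - p) ^+ a n * (a n)%:R * (p - p') <= (1 - p') ^+ a n.
  by have := @bernoulli_ineq R (1 - p) (p - p') (a n); rewrite subrKA; apply; lra.
have -> : (a n)%:R * conn_prob a p' n * (p - p') * (1 - p) ^+ a n =
          conn_prob a p' n * ((1 - p) ^+ a n * (a n)%:R * (p - p')) by ring.
by rewrite ler_wpM2l ?conn_prob_ge0.
Qed.

Lemma vanishing_conn_prob_lt (R : realType) (a : nat -> nat) (p' p : R) :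
  (forall n, (0 < a n)%N) -> 0 <= p' -> p' < p -> p <= 1 ->
  (forall e, 0 < e -> exists k, conn_prob a p k < e) ->
  forall e, 0 < e -> exists k, (a k)%:R * conn_prob a p' k < e.
Proof.
move=> apos p'0 p'p p1 vanish c c0.
have p01 : 0 <= p <= 1 by apply/andP; split; lra.
case: (pselect (exists k, (a k)%:R * conn_prob a p' k < c)) => //.
move=> /forallNP c_gt; have {}c_le k : c <= (a k)%:R * conn_prob a p' k.
  by rewrite leNgt; apply/negP; exact: c_gt.
have cd0 : 0 < c * (p - p') by rewrite mulr_gt0 // subr_gt0.
have [j conn_j] := vanish (c * (p - p') / 2) ltac:(lra).
have conn'_j : conn_prob a p' j <= c * (p - p') / 2.
  by apply: le_trans (ltW conn_j); apply: conn_prob_homo => //; lra.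
have conn_j0 : 0 < conn_prob a p j by apply: conn_prob_gt0 => //; lra.
have lb k : conn_prob a p j / 2 <= conn_prob a p k.
  have [jk | kj] := leqP j k; last first.
    by have := conn_prob_nonincr a p01 (ltnW kj); lra.
  rewrite (conn_prob_cat _ _ jk).
  have sum_le : \sum_(j <= n < k) (1 - p) ^+ a n <= 1 / 2.
    by rewrite -(ler_pM2l cd0); have := tail_sum_closed_le p'0 p'p p1 c_le jk; lra.
  have prod_ge := sub1_sum_le_prod (index_iota j k) (fun n => exprn1B_in01 (a n) p01).
  have : conn_prob a p j * (1 / 2) <= conn_prob a p j * \prod_(j <= n < k) (1 - (1 - p) ^+ a n).
    by rewrite ler_wpM2l ?conn_prob_ge0 //; lra.
  lra.
have [k conn_k] := vanish (conn_prob a p j / 2) ltac:(lra).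
by have := lb k; lra.
Qed.

Section Truncation.
Variables (a : nat -> nat) (N : nat).

Definition edge_level (e : EN a N) : nat := (ssval e).1.

Lemma mem_edges_upto e : (e \in edges_upto a N) = (e.1 < N)%N && (e.2 < a e.1)%N.
Proof.
apply/allpairsPdep/andP => [[n [i [n_in i_in ->]]] | [e1_lt e2_lt]].
  by move: n_in i_in; rewrite !mem_iota.
by exists e.1, e.2; rewrite !mem_iota e1_lt e2_lt; case: e {e1_lt e2_lt}.
Qed.

Lemma card_edge_level_le n : (#|[pred e | edge_level e == n]| <= a n)%N.
Proof.
rewrite cardE -(size_map (fun e : EN a N => (ssval e).2)) -(size_iota 0 (a n)).
apply: uniq_leq_size => [|i /mapP[e]].
  rewrite map_inj_in_uniq ?enum_uniq // => e1 e2; rewrite !mem_enum !inE => /eqP lev1 /eqP lev2 eq2.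
  apply: val_inj; move: lev1 lev2 eq2; rewrite /edge_level /=.
  by case: (ssval e1) => ? ?; case: (ssval e2) => ? ? /= -> -> ->.
rewrite mem_enum inE => /eqP lev_e ->.
by have := ssvalP e; rewrite mem_edges_upto mem_iota -lev_e => /andP[].
Qed.

Lemma card_edge_level n : (n < N)%N -> #|[pred e | edge_level e == n]| = a n.
Proof.
move=> n_lt; apply/eqP; rewrite eqn_leq card_edge_level_le /=.
rewrite cardE -(size_map (fun e : EN a N => (ssval e).2)) -{1}(size_iota 0 (a n)).
apply: uniq_leq_size; first exact: iota_uniq.
move=> i; rewrite mem_iota add0n => i_lt.
have ni_in : (n, i) \in edges_upto a N by rewrite mem_edges_upto /= n_lt.
by apply/mapP; exists (SeqSub ni_in); rewrite // mem_enum inE.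
Qed.

Lemma inC_open_levels (w : config a N) v k :
  inC w v -> (k <= v)%N -> open_levels edge_level k w.
Proof.
move=> Cv k_le_v; apply/forallP => n; apply/existsP.
elim: (clos_rt_rtn1 _ _ _ _ Cv) (n : nat) (leq_trans (ltn_ord n) k_le_v)
  => [|y z [e [we yz]] _ IH] m //.
case: yz => -[-> ->] in IH * => m_lt; last by apply: IH; apply: ltn_trans m_lt _.
have [m_lt' | ] := ltnP m (edge_level e); first exact: IH.
move=> e_le_m; exists e; rewrite we andbT; apply/eqP/anti_leq.
by rewrite e_le_m -ltnS m_lt.
Qed.

Lemma open_levels_inC (w : config a N) k : open_levels edge_level k w -> inC w k.
Proof.
elim: k => [|k IH]; first by move=> _; apply: rt_refl.
rewrite open_levelsS => /andP[/IH Ck /existsP[e /andP[/eqP lev_e we]]].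
by apply: rt_trans Ck (rt_step _ _ _ _ _); exists e; split => //; left; rewrite -lev_e.
Qed.

End Truncation.

Lemma weight_ge0 (R : realType) (a : nat -> nat) N (p : R) (w : config a N) :
  0 <= p <= 1 -> 0 <= weight p w.
Proof. by case/andP=> p0 p1; apply: prodr_ge0 => e _; case: (w e); lra. Qed.

Lemma conn_prob_le_expV_N (R : realType) (a : nat -> nat) (p : R) (T : set nat) k :
  0 <= p <= 1 -> T k -> conn_prob a p k <= expV_N a p T k.
Proof.
move=> p01 Tk.
have -> : conn_prob a p k = \sum_(w : config a k) weight p w * (open_levels (@edge_level a k) k w)%:R.
  rewrite /weight prob_open_levels /conn_prob big_mkord.
  by apply: eq_bigr => n _; rewrite card_edge_level.
apply: ler_sum => w _; rewrite ler_wpM2l ?weight_ge0 // ler_nat.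
case open_k: (open_levels _ k w) => //.
apply/card_gt0P; exists ord_max; rewrite inE; apply/asboolP; split => //.
exact: open_levels_inC.
Qed.

Definition level_edges (a : nat -> nat) (k : nat) : set (nat * nat) :=
  fun e => e.1 = k /\ (e.2 < a k)%N.

Lemma level_edges_cutset a k : edge_cutset a (level_edges a k).
Proof.
split; first by move=> e [e1_k e2_lt]; rewrite /is_edge e1_k.
exists k.+1 => v Cv; rewrite ltnS.
elim: (clos_rt_rtn1 _ _ _ _ Cv) => [|y z [e [e_edge [not_cut yz]]] _ y_le] //.
case: yz => -[y_eq z_eq]; last by rewrite z_eq -ltnS -y_eq ltnW.
rewrite z_eq -y_eq ltn_neqAle y_le andbT; apply/eqP => y_k; apply: not_cut.
by split; rewrite -?y_k y_eq //; move: e_edge; rewrite /is_edge -y_k y_eq.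
Qed.

Lemma countE_level_edges_le a N (w : config a N) k :
  (countE (level_edges a k) w <= a k * open_levels (@edge_level a N) k w)%N.
Proof.
case open_k: (open_levels _ k w); rewrite ?muln1 ?muln0.
  apply: leq_trans (card_edge_level_le a N k); apply: subset_leq_card.
  by apply/fintype.subsetP => e; rewrite inE => /asboolP[_ [_ [lev_e _]]]; rewrite inE; apply/eqP.
rewrite leqn0; apply/eqP/eq_card0 => e; rewrite [RHS]/= inE.
apply/negbTE/negP => /asboolP /= /asboolP[we [Ce [lev_e _]]]; move/negP: open_k; apply.
by case: Ce => Ce; apply: (inC_open_levels Ce); rewrite lev_e.
Qed.

Lemma expE_N_level_edges_le (R : realType) (a : nat -> nat) (p : R) k N :
  0 <= p <= 1 -> expE_N a p (level_edges a k) N <= (a k)%:R * conn_prob a p k.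
Proof.
move=> p01; have /andP[p0 p1] := p01.
apply: (@le_trans _ _ ((a k)%:R *
  \sum_(w : config a N) weight p w * (open_levels (@edge_level a N) k w)%:R)).
  rewrite mulr_sumr; apply: ler_sum => w _.
  rewrite mulrCA ler_wpM2l ?weight_ge0 // -natrM ler_nat.
  exact: countE_level_edges_le.
rewrite ler_wpM2l // /weight prob_open_levels /conn_prob big_mkord.
apply: ler_prod => n _; rewrite subr_ge0 exprn_ile1 ?lerD2l ?lerN2 //=; try lra.
by rewrite ler_wiXn2l ?card_edge_level_le //; lra.
Qed.

Lemma vertex_cutset_meets a (T : set nat) :
  (forall n, (0 < a n)%N) -> vertex_cutset a T -> exists k, T k.
Proof.
move=> apos [N cut]; apply: contrapT => /forallNP notT.
have reach n : clos_refl_trans nat (adjV a T) 0%N n.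
  elim: n => [|n IH]; first exact: rt_refl.
  apply: rt_trans IH (rt_step _ _ _ _ _); split; [exact: notT | split; [exact: notT |]].
  by exists (n, 0%N); split; [exact: apos | left].
by have := cut N (notT 0%N) (reach N); rewrite ltnn.
Qed.

Local Open Scope ereal_scope.

Lemma inf_expV_eq0_conn_prob_vanish (R : realType) (a : nat -> nat) (p : R) :
  (forall n, (0 < a n)%N) -> (0 <= p <= 1)%R ->
  ereal_inf [set expV a p T | T in vertex_cutset a] = 0 ->
  forall e, (0 < e)%R -> exists k, (conn_prob a p k < e)%R.
Proof.
move=> apos p01 inf0 e e0; apply: contrapT => /forallNP conn_ge.
suff : e%:E <= ereal_inf [set expV a p T | T in vertex_cutset a].
  by rewrite inf0 lee_fin leNgt e0.
apply/ereal_infP => _ [T cutT <-]; have [k Tk] := vertex_cutset_meets apos cutT.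
apply: (@le_trans _ _ (expV_N a p T k)%:E); last by apply: ereal_sup_ubound; exists k.
rewrite lee_fin; apply: le_trans (conn_prob_le_expV_N a p01 Tk).
by rewrite leNgt; apply/negP; exact: conn_ge.
Qed.

Lemma inf_expE_eq0 (R : realType) (a : nat -> nat) (p : R) :
  (0 <= p <= 1)%R ->
  (forall e, (0 < e)%R -> exists k, ((a k)%:R * conn_prob a p k < e)%R) ->
  ereal_inf [set expE a p S | S in edge_cutset a] = 0.
Proof.
move=> p01 vanish; apply/eqP; rewrite eq_le; apply/andP; split.
  apply/lee_addgt0Pr => e e0; rewrite add0e; have [k mass_k] := vanish e e0.
  apply: (@le_trans _ _ (expE a p (level_edges a k))).
    by apply: ereal_inf_lbound; exists (level_edges a k) => //; exact: level_edges_cutset.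
  apply/ereal_supP => _ [N _ <-]; rewrite lee_fin; apply: le_trans (ltW mass_k).
  exact: expE_N_level_edges_le.
apply/ereal_infP => _ [S _ <-].
apply: (@le_trans _ _ (expE_N a p S 0)%:E); last by apply: ereal_sup_ubound; exists 0%N.
by rewrite lee_fin; apply: sumr_ge0 => w _; rewrite mulr_ge0 ?weight_ge0.
Qed.

Lemma ereal_sup_EFin_le (R : realType) (A B : set R) :
  (forall p, A p -> forall q, (q < p)%R -> exists2 x, B x & (q <= x)%R) ->
  ereal_sup [set p%:E | p in A] <= ereal_sup [set p%:E | p in B].
Proof.
move=> approx; apply/ereal_supP => _ [p Ap <-].
have ub x : B x -> x%:E <= ereal_sup [set p%:E | p in B].
  by move=> Bx; apply: ereal_sup_ubound; exists x.
case: (ereal_sup _) ub => [r | | ] ub; last 2 first.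
- by rewrite leey.
- have [x Bx _] := approx p Ap (p - 1)%R ltac:(by rewrite ltrBlDr ltrDl).
  by have := ub x Bx.
rewrite lee_fin; apply/unstable.ler_ltP => q qp.
by have [x Bx qx] := approx p Ap q qp; apply: le_trans qx _; rewrite -lee_fin ub.
Qed.

Theorem proposition5p5 (R : realType) (a : nat -> nat) :
  (forall n, (0 < a n)%N) -> ~ (p_cut_E R a < p_cut_V R a)%E.
Proof.
move=> apos; apply/negP; rewrite -leNgt; apply: ereal_sup_EFin_le => p [p01 infV0] q qp.
have zero_in : (0 <= 0 <= 1)%R /\ ereal_inf [set expE a 0 S | S in edge_cutset a] = 0.
  split; first by rewrite lexx ler01.
  apply: inf_expE_eq0; first by rewrite lexx ler01.
  by move=> e e0; exists 1%N; rewrite /conn_prob big_nat1 subr0 expr1n subrr mulr0.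
have [q0 | q_lt0] := leP 0%R q; last by exists 0%R; [exact: zero_in | exact: ltW].
exists q => //; have /andP[_ p1] := p01.
have q01 : (0 <= q <= 1)%R by rewrite q0 (le_trans (ltW qp) p1).
split => //; apply: inf_expE_eq0 => //.
exact: vanishing_conn_prob_lt apos q0 qp p1 (inf_expV_eq0_conn_prob_vanish apos p01 infV0).
Qed.
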